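(* Let $(M,\mathrm{d})$ be a metric space, $\mathcal X$ a set, $\mathcal S\subseteq M^{\mathcal X}$, $\tau>0$, and let $\mathcal Z:\mathcal S\to\mathcal P(\mathcal T)$ be a learning problem. Let $\mu$ be a probability measure over $\mathcal S$. Suppose there is a deterministic algorithm $\mathcal A$ that learns $\mathcal Z$ with probability $\beta$ over the instance $s\sim\mu$ from $q$ many $\tau$-accurate evaluation queries. Then for any $f\in M^{\mathcal X}$ it holds $$q\geq\frac{\beta-\sup_{t\in\mathcal T}\Pr_{s\sim\mu}[s\in\mathcal Z_t]}{\max_{x\in\mathcal X}\Pr_{s\sim\mu}\left[\mathrm{d}(s(x),f(x))>\tau\right]}.$$
   Context: A learning problem is a map $\mathcal Z:\mathcal S\to\mathcal P(\mathcal T)$ into the power set of a target set $\mathcal T$; given oracle access to an unknown source $s\in\mathcal S$, the task is to output some $t\in\mathcal Z(s)$. For $t\in\mathcal T$, $\mathcal Z_t=\{s\in\mathcal S: t\in\mathcal Z(s)\}$. For $s\in M^{\mathcal X}$ and $\tau>0$, the evaluation oracle $\mathrm{Eval}_\tau(s)$, when queried with $x\in\mathcal X$, returns some $v\in M$ with $\mathrm{d}(v,s(x))\le\tau$ (any such value may be returned); such a query is a $\tau$-accurate evaluation query. A deterministic algorithm learns $\mathcal Z$ with probability $\beta$ over $s\sim\mu$ from $q$ queries if $\Pr_{s\sim\mu}[\mathcal A$ with access to $\mathrm{Eval}_\tau(s)$ outputs an element of $\mathcal Z(s)$ using at most $q$ queries$]\ge\beta$, where success is required for every valid behaviour of the oracle.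 *)

From HB Require Import structures.
From mathcomp Require Import all_boot all_order all_algebra.
From mathcomp Require Import all_classical all_reals all_analysis.
Set Implicit Arguments. Unset Strict Implicit. Unset Printing Implicit Defensive.
Import Order.TTheory GRing.Theory Num.Theory.
Local Open Scope classical_set_scope.
Local Open Scope ring_scope.

Definition is_metric (R : realType) (M : Type) (dist : M -> M -> R) : Prop :=
  [/\ forall x y, 0 <= dist x y,
      forall x y, dist x y = 0 <-> x = y,
      forall x y, dist x y = dist y x &
      forall x y z, dist x z <= dist x y + dist y z].

(* A deterministic (adaptive) algorithm: given the answers received so far,
   it either issues a query x : X (inl x) or outputs a target t : T (inr t). *)
Definition algorithm (X M T : Type) := seq M -> X + T.

(* [succeeds_within dist tau A sx good n h]: started from answer history h,
   the algorithm A, interacting with Eval_tau(sx), outputs an element of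
   [good] using at most n further queries, for EVERY valid behaviour of the
   oracle (i.e. for every answer v with dist v (sx x) <= tau to each query x). *)
Fixpoint succeeds_within (R : realType) (X M T : Type)
    (dist : M -> M -> R) (tau : R) (A : algorithm X M T)
    (sx : X -> M) (good : set T) (n : nat) (h : seq M) : Prop :=
  match A h with
  | inr t => good t
  | inl x =>
      match n with
      | 0 => False
      | n'.+1 => forall v : M, dist v (sx x) <= tau ->
                   succeeds_within dist tau A sx good n' (rcons h v)
      end
  end.

Definition Zt (S T : Type) (Z : S -> set T) (t : T) : set S := [set s | Z s t].

(* Supremum of a family of probabilities (values in [0,1]); 0 is adjoined so
   that the empty family has supremum 0 (it never changes a nonempty sup). *)
Definition sup_prob (R : realType) (I : Type) (p : I -> \bar R) : \bar R :=
  ereal_sup ([set 0%E] `|` range p).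

From HB Require Import structures.
From mathcomp Require Import all_boot all_order all_algebra.
From mathcomp Require Import all_classical all_reals all_analysis.
Set Implicit Arguments. Unset Strict Implicit. Unset Printing Implicit Defensive.
Import Order.TTheory GRing.Theory Num.Theory.
Local Open Scope classical_set_scope.
Local Open Scope ring_scope.

(** Run A once against the exact oracle of f, which answers every query x with
    f(x); this run issues at most q queries x_1, ..., x_k and possibly outputs
    some t.  If A succeeds on an instance s, then either f(x_i) is a valid
    tau-accurate answer for s at every x_i, so that s sees the same run and
    t is in Z(s), i.e. s is in Z_t; or d(s(x_i), f(x_i)) > tau for some i.
    Hence beta <= Pr[Z_t] + sum_i Pr[d(s(x_i), f(x_i)) > tau], which is at most
    sup_t Pr[Z_t] + q max_x Pr[d(s(x), f(x)) > tau]. *)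

Section OracleRun.
Variables (X M T : Type) (A : algorithm X M T) (ans : X -> M).

Fixpoint oracle_run (n : nat) (h : seq M) : seq X * option T :=
  match A h with
  | inr t => ([::], Some t)
  | inl x => match n with
             | 0 => ([::], None)
             | n'.+1 => let r := oracle_run n' (rcons h (ans x)) in (x :: r.1, r.2)
             end
  end.

Lemma size_oracle_run_queries n h : (size (oracle_run n h).1 <= n)%N.
Proof.
elim: n h => [|n IHn] h /=; first by case: (A h).
by case: (A h) => //= x; exact: IHn.
Qed.

Variables (R : realType) (dist : M -> M -> R) (tau : R).
Hypothesis dist_sym : forall u v, dist u v = dist v u.

Lemma succeeds_within_oracle_run (I : Type) (sx : I -> X -> M)
    (good : I -> set T) n h :
  [set i | succeeds_within dist tau A (sx i) (good i) n h] `<=`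
  ([set i | oapp (good i) False (oracle_run n h).2] `|`
   \big[setU/set0]_(x <- (oracle_run n h).1) [set i | tau < dist (sx i x) (ans x)]).
Proof.
elim: n h => [|n IHn] h i /=; first by case: (A h) => // t; left.
case: (A h) => [x succ_i|t]; last by left.
rewrite big_cons.
have [far_x|] := boolP (tau < dist (sx i x) (ans x)); first by right; left.
rewrite -leNgt dist_sym => /succ_i /IHn [out_i|far_i]; first by left.
by right; right.
Qed.

End OracleRun.

Lemma measure_bigsetU_le_size d (R : realFieldType) (T : ringOfSetsType d)
    (mu : {content set T -> \bar R}) (I : Type) (r : seq I) (F : I -> set T)
    (c : \bar R) :
  (forall i, measurable (F i)) -> (forall i, (mu (F i) <= c)%E) ->
  (mu (\big[setU/set0]_(i <- r) F i) <= (size r)%:R%:E * c)%E.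
Proof.
move=> mF muF_le; elim: r => [|i r IHr]; first by rewrite big_nil measure0 mul0e.
rewrite big_cons; apply: (le_trans (measureU2 _ _ _)) => //.
  exact: bigsetU_measurable.
by rewrite /= -addn1 natrD EFinD addeC ge0_muleDl // mul1e leeD.
Qed.

Section SupProb.
Variables (R : realType) (I : Type) (p : I -> \bar R).

Lemma sup_prob_ge0 : (0 <= sup_prob p)%E.
Proof. by apply: ereal_sup_ubound; left. Qed.

Lemma sup_prob_ub i : (p i <= sup_prob p)%E.
Proof. by apply: ereal_sup_ubound; right; exists i. Qed.

Lemma sup_prob_fin_num : (forall i, p i <= 1)%E -> sup_prob p \is a fin_num.
Proof.
move=> p_le1; rewrite ge0_fin_numE ?sup_prob_ge0 //.
apply: (le_lt_trans _ (ltry 1)).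
by apply/ereal_supP => _ [->|[i _ <-]]; [exact: lee01 | exact: p_le1].
Qed.

End SupProb.

Section OutputEvent.
Variables (d : measure_display) (S : measurableType d) (R : realType) (T : Type).
Variables (Z : S -> set T) (mu : {measure set S -> \bar R}).

Lemma measurable_output_event (o : option T) :
  (forall t, measurable (Zt Z t)) -> measurable [set s | oapp (Z s) False o].
Proof.
move=> mZ; case: o => [t|]; first exact: mZ.
by rewrite (_ : [set _ | False] = set0).
Qed.

Lemma measure_output_event_le (o : option T) :
  (mu [set s | oapp (Z s) False o] <= sup_prob (fun t => mu (Zt Z t)))%E.
Proof.
case: o => [t|]; first exact: (sup_prob_ub (fun t => mu (Zt Z t))).
by rewrite (_ : [set _ | False] = set0) // measure0 sup_prob_ge0.
Qed.

End OutputEvent.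

Theorem mainTheorem1
  (R : realType) (M X T : Type) (dist : M -> M -> R) (hdist : is_metric dist)
  (d : measure_display) (S : measurableType d) (emb : S -> (X -> M))
  (emb_inj : injective emb)
  (tau : R) (htau : 0 < tau)
  (Z : S -> set T) (mu : probability S R)
  (A : algorithm X M T) (beta : R) (q : nat)
  (f : X -> M)
  (meas_succ : measurable [set s | succeeds_within dist tau A (emb s) (Z s) q [::]])
  (meas_Zt : forall t : T, measurable (Zt Z t))
  (meas_far : forall x : X, measurable [set s | tau < dist (emb s x) (f x)])
  (hlearn : (beta%:E <= mu [set s | succeeds_within dist tau A (emb s) (Z s) q [::]])%E) :
  (beta%:E - sup_prob (fun t : T => mu (Zt Z t))
    <= q%:R%:E * sup_prob (fun x : X => mu [set s | (tau < dist (emb s x) (f x))%R]))%E.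
Proof.
case: hdist => _ _ dist_sym _.
rewrite leeBlDl; last by apply: sup_prob_fin_num => t; exact: probability_le1.
have succ_sub := succeeds_within_oracle_run (A := A) f dist_sym
  (tau := tau) (sx := emb) (good := Z) (n := q) (h := [::]).
set run := oracle_run A f q [::] in succ_sub.
have meas_out := measurable_output_event run.2 meas_Zt.
have meas_far_run : measurable (\big[setU/set0]_(x <- run.1)
    [set s | tau < dist (emb s x) (f x)]) by exact: bigsetU_measurable.
apply: (le_trans hlearn); apply: (le_trans (le_measure _ _ _ succ_sub)).
- by rewrite inE.
- by rewrite inE; apply: measurableU.
apply: (le_trans (measureU2 _ meas_out meas_far_run)).
apply: leeD; first exact: measure_output_event_le.
apply: (le_trans (measure_bigsetU_le_size _ meas_far
  (sup_prob_ub (fun x => mu [set s | tau < dist (emb s x) (f x)])))).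
apply: lee_wpmul2r; first exact: sup_prob_ge0.
by rewrite lee_fin ler_nat size_oracle_run_queries.
Qed.
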